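(* Let $\mathbb{T}$ be a time scale, let $I\subseteq\mathbb{R}$ be an interval, write $I_{\mathbb{T}}:=I\cap\mathbb{T}$, and let $t_0\in I_{\mathbb{T}}$. Let $p,q\in\mathbb{R}$ be constants and put $k:=1+|p|+|q|$. If $y$ is any solution on $I_{\mathbb{T}}$ of the homogeneous dynamic equation $$y^{\Delta\Delta}(t)+p\,y^{\Delta}(t)+q\,y(t)=0,$$ then $$\|y(t)\|_2\le \|y(t_0)\|_2\, e_k(t,t_0)\qquad\text{for all } t\in I_{\mathbb{T}},\ t\ge t_0,$$ where $\|y(t)\|_2:=\big((y(t))^2+(y^\Delta(t))^2\big)^{1/2}$.
   Context: A time scale $\mathbb{T}$ is a nonempty closed subset of $\mathbb{R}$. The forward jump operator is $\sigma(t):=\inf\{s\in\mathbb{T}:s>t\}$, the graininess is $\mu(t):=\sigma(t)-t$, and $y^\sigma:=y\circ\sigma$. The delta derivative is $y^\Delta(t):=\lim_{s\to t}\frac{y^\sigma(t)-y(s)}{\sigma(t)-s}$ (for $t\in\mathbb{T}^\kappa$), and $y^{\Delta\Delta}=(y^\Delta)^\Delta$. For a right-dense continuous function $\ell$ with $1+\mu(t)\ell(t)\neq0$, the time-scale exponential $e_\ell(\cdot,t_0)$ is the unique solution of $\phi^\Delta(t)=\ell(t)\phi(t)$, $\phi(t_0)=1$; for a positive constant $k$ this applies. *)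

From HB Require Import structures.
From mathcomp Require Import all_boot all_order all_algebra.
From mathcomp Require Import all_classical all_reals all_analysis.
Set Implicit Arguments. Unset Strict Implicit. Unset Printing Implicit Defensive.
Import Order.TTheory GRing.Theory Num.Theory numFieldNormedType.Exports.
Local Open Scope classical_set_scope.
Local Open Scope ring_scope.

Section TimeScale.
Variable R : realType.

Definition time_scale (T : set R) : Prop := T !=set0 /\ closed T.

Definition fjump (T : set R) (t : R) : R :=
  if pselect (exists s, T s /\ t < s) is left _
  then inf [set s | T s /\ t < s] else t.

Definition bjump (A : set R) (t : R) : R :=
  if pselect (exists s, A s /\ s < t) is left _
  then sup [set s | A s /\ s < t] else t.

Definition kappa (A : set R) : set R :=
  [set t | A t /\ ~ ((forall s, A s -> s <= t) /\ bjump A t < t)].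

Definition delta_deriv (T : set R) (f : R -> R) (t D : R) : Prop :=
  forall eps : R, 0 < eps -> exists2 delta : R, 0 < delta &
    forall s, T s -> `|t - s| < delta ->
      `|f (fjump T t) - f s - D * (fjump T t - s)| <= eps * `|fjump T t - s|.

Definition is_ts_exp (T : set R) (k t0 : R) (phi : R -> R) : Prop :=
  phi t0 = 1 /\ forall t, kappa T t -> delta_deriv T phi t (k * phi t).

End TimeScale.

From HB Require Import structures.
From mathcomp Require Import all_boot all_order all_algebra.
From mathcomp Require Import all_classical all_reals all_analysis.
From mathcomp Require Import ring lra.
Set Implicit Arguments. Unset Strict Implicit. Unset Printing Implicit Defensive.
Import Order.TTheory GRing.Theory Num.Theory numFieldNormedType.Exports.
Local Open Scope classical_set_scope.
Local Open Scope ring_scope.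

(* For K > y(t0)^2 + y^Δ(t0)^2 the invariant
     1 <= e_k(t)  and  y(t)^2 + y^Δ(t)^2 <= K e_k(t)^2
   propagates forward along the time scale.  Across a right-scattered point the
   equation gives y(σ t)^2 + y^Δ(σ t)^2 <= (1 + k μ(t))^2 (y(t)^2 + y^Δ(t)^2),
   while e_k(σ t) = (1 + k μ(t)) e_k(t).  At a right-dense point the right
   derivative of K e_k^2 - y^2 - (y^Δ)^2 is at least K e_k(t)^2 > 0, which is
   why K is taken strictly above the initial energy; at a left-dense point the
   invariant passes to the limit since delta-differentiable functions are
   continuous.  Letting K decrease to the initial energy and taking square
   roots gives the estimate. *)

Lemma le0_small_mul (R : realFieldType) (x c : R) : 0 <= c ->
  (forall e, 0 < e -> x <= e * c) -> x <= 0.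
Proof.
move=> c0 small; apply/ler_addgt0Pr => e e0; rewrite add0r.
have c1 : 0 < c + 1 by lra.
apply: le_trans (small _ (divr_gt0 e0 c1)) _.
rewrite mulrAC ler_pdivrMr // ler_pM2l //; lra.
Qed.

Section TimeScale.
Variable R : realType.
Implicit Types (A T : set R) (t u m : R).

Lemma closure_inf A : A !=set0 -> has_lbound A -> closure A (inf A).
Proof.
move=> A0 lbA B /nbhs_ballP[e /= e0 eB].
have [x Ax xe] := inf_adherent e0 (conj A0 lbA).
have Ax_ge : inf A <= x by apply: ge_inf.
exists x; split => //; apply: eB.
by rewrite -ball_normE /= distrC ger0_norm ?subr_ge0 //; lra.
Qed.

Lemma closure_dist A t e : closure A t -> 0 < e -> exists2 s, A s & `|t - s| < e.
Proof.
move=> clA e0; have [s [As ts]] := clA _ (nbhsx_ballx _ _ e0).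
by exists s; rewrite // -ball_normE.
Qed.

Lemma closure_cvg_ge A (f : R -> R) t l c : closure A t ->
  f @ within A (nbhs t) --> l -> (forall s, A s -> c <= f s) -> c <= l.
Proof.
move=> clA fl cf; have FF := within_nbhs_proper clA.
apply: (closed_cvg [set x | c <= x] (@closed_ge _ c) _ l fl).
by rewrite near_withinE; apply: nearW => s; exact: cf.
Qed.

Lemma fjump_scattered T t m : T m -> t < m ->
  (forall s, T s -> t < s -> m <= s) -> fjump T t = m.
Proof.
move=> Tm tm next; rewrite /fjump; case: pselect => [_|]; last by case; exists m.
apply/le_anti/andP; split; first by apply: ge_inf => //; exists t => s [_ /ltW].
by apply: lb_le_inf; [exists m | move=> s []; exact: next].
Qed.

Lemma fjump_dense T t : closure [set s | T s /\ t < s] t -> fjump T t = t.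
Proof.
move=> cl; rewrite /fjump; case: pselect => [[s0 Ts0]|//].
set G := [set s | T s /\ t < s].
apply/le_anti/andP; split; last by apply: lb_le_inf; [exists s0 | move=> s [_ /ltW]].
rewrite leNgt; apply/negP => t_lt_inf.
have gap : 0 < inf G - t by rewrite subr_gt0.
have [s [Ts ts] st] := closure_dist cl gap.
have Gs : inf G <= s by apply: ge_inf => //; exists t => x [_ /ltW].
by move: st; rewrite distrC gtr0_norm ?subr_gt0 //; lra.
Qed.

Lemma bjump_dense A t : closure [set s | A s /\ s < t] t -> bjump A t = t.
Proof.
move=> cl; rewrite /bjump; case: pselect => [[s0 As0]|//].
set G := [set s | A s /\ s < t].
have ubG : ubound G t by move=> s [_ /ltW].
apply/le_anti/andP; split; first by apply: ge_sup => //; exists s0.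
rewrite leNgt; apply/negP => sup_lt_t.
have gap : 0 < t - sup G by rewrite subr_gt0.
have [s [As st] ts] := closure_dist cl gap.
have sG : s <= sup G by apply: ub_le_sup => //; exists t.
by move: ts; rewrite gtr0_norm ?subr_gt0 //; lra.
Qed.

Lemma kappa_lt A t u : A t -> A u -> t < u -> kappa A t.
Proof. by move=> At Au tu; split => // -[/(_ u Au)]; rewrite leNgt tu. Qed.

Lemma kappa_dense A t : A t -> closure [set s | A s /\ s < t] t -> kappa A t.
Proof. by move=> At /bjump_dense bt; split => // -[_]; rewrite bt ltxx. Qed.

End TimeScale.

Section DeltaDerivative.
Variable R : realType.
Implicit Types (T : set R) (f : R -> R) (t D : R).

Lemma delta_deriv_near T f t D : delta_deriv T f t D -> forall e, 0 < e ->
  \forall s \near within T (nbhs t),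
    `|f (fjump T t) - f s - D * (fjump T t - s)| <= e * `|fjump T t - s|.
Proof.
move=> df e e0; have [d d0 dd] := df e e0.
apply/nbhs_ballP; exists d => // s; rewrite -ball_normE /= => ts Ts; exact: dd.
Qed.

Lemma delta_deriv_fjump T f t D : delta_deriv T f t D -> T t ->
  f (fjump T t) = f t + D * (fjump T t - t).
Proof.
move=> df Tt; apply/eqP; rewrite -subr_eq0 -normr_le0.
apply: (le0_small_mul (normr_ge0 (fjump T t - t))) => e e0.
by rewrite opprD addrA; exact: nbhs_singleton (delta_deriv_near df e0) Tt.
Qed.

Lemma delta_deriv_cvg T f t D : delta_deriv T f t D -> T t ->
  f @ within T (nbhs t) --> f t.
Proof.
move=> df Tt; apply/cvgrPdist_le => e e0.
have ft := delta_deriv_fjump df Tt.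
set sg := fjump T t in ft *; set mu := `|sg - t|.
have mu0 : 0 <= mu by exact: normr_ge0.
have D0 : 0 <= `|D| by exact: normr_ge0.
have a0 : 0 < e / 2 / (mu + 1) by rewrite !divr_gt0 //; lra.
have d0 : 0 < Num.min 1 (e / 2 / (`|D| + 1)) by rewrite lt_min ltr01 !divr_gt0 //; lra.
near=> s.
have ts : `|t - s| < Num.min 1 (e / 2 / (`|D| + 1)).
  by near: s; apply: cvg_within; exact: nbhsx_ballx.
have Rs : `|f sg - f s - D * (sg - s)| <= e / 2 / (mu + 1) * `|sg - s|.
  by near: s; exact: delta_deriv_near.
move: ts; rewrite lt_min => /andP[ts1 ts2].
have split_ts : f t - f s = (f sg - f s - D * (sg - s)) + D * (t - s) by rewrite ft; ring.
have sgs : `|sg - s| <= mu + 1.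
  have -> : sg - s = (sg - t) + (t - s) by ring.
  by apply: le_trans (ler_normD _ _) _; rewrite lerD2l ltW.
have R2 : e / 2 / (mu + 1) * `|sg - s| <= e / 2.
  by rewrite mulrAC ler_pdivrMr ?ler_pM2l //; lra.
have D2 : `|D * (t - s)| <= e / 2.
  rewrite normrM; apply: le_trans (_ : _ <= (`|D| + 1) * (e / 2 / (`|D| + 1))) _.
    by apply: ler_pM; [exact: normr_ge0 | exact: normr_ge0 | lra | exact: ltW].
  by rewrite mulrC divfK // gt_eqF //; lra.
by rewrite split_ts; apply: le_trans (ler_normD _ _) _; lra.
Unshelve. all: by end_near.
Qed.
End DeltaDerivative.

Section RightDerivative.
Variable R : realType.
Implicit Types (T : set R) (f g : R -> R) (t D : R).

Definition right_deriv_within T f t D : Prop :=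
  (fun s => (f s - f t) / (s - t)) @ within T t^'+ --> D.

Lemma delta_deriv_dense T f t D : delta_deriv T f t D -> fjump T t = t ->
  right_deriv_within T f t D.
Proof.
move=> df ft; apply/cvgrPdist_le => e e0.
have := delta_deriv_near df e0; rewrite ft => near_t; near=> s.
have ts : t < s by near: s; apply: cvg_within; exact: nbhs_right_gt.
have near_s : `|f t - f s - D * (t - s)| <= e * `|t - s|.
  by near: s; exact: (@cvg_within _ (nbhs t) _ (fun s => t < s) _ near_t).
have st : 0 < s - t by rewrite subr_gt0.
have -> : D - (f s - f t) / (s - t) = (f t - f s - D * (t - s)) / (s - t).
  by field; rewrite gt_eqF.
rewrite normrM normfV (gtr0_norm st) ler_pdivrMr //.
by rewrite (distrC t s) (gtr0_norm st) in near_s.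
Unshelve. all: by end_near.
Qed.

Lemma right_deriv_within_cvg T f t D : right_deriv_within T f t D ->
  f @ within T t^'+ --> f t.
Proof.
move=> df.
have ts : (fun s => s - t) @ within T t^'+ --> 0.
  rewrite -(subrr t); apply: cvgB; last exact: cvg_cst.
  by apply: cvg_trans (cvg_within T) _; exact: cvg_within.
have : (fun s => f t + (f s - f t) / (s - t) * (s - t)) @ within T t^'+ --> f t + D * 0.
  by apply: cvgD; [exact: cvg_cst | exact: cvgM].
rewrite mulr0 addr0; apply: cvg_trans; apply: near_eq_cvg.
near=> s; have : t < s by near: s; apply: cvg_within; exact: nbhs_right_gt.
by move=> ts'; rewrite divfK ?subrKC // subr_eq0 gt_eqF.
Unshelve. all: by end_near.
Qed.

Lemma right_deriv_withinD T f g t Df Dg : right_deriv_within T f t Df ->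
  right_deriv_within T g t Dg -> right_deriv_within T (f \+ g) t (Df + Dg).
Proof.
move=> df dg; rewrite /right_deriv_within.
suff -> : (fun s => ((f \+ g) s - (f \+ g) t) / (s - t)) =
  (fun s => (f s - f t) / (s - t) + (g s - g t) / (s - t)) by exact: cvgD.
by apply/funext => s /=; rewrite -mulrDl; congr (_ * _); ring.
Qed.

Lemma right_deriv_withinN T f t D : right_deriv_within T f t D ->
  right_deriv_within T (fun s => - f s) t (- D).
Proof.
move=> df; rewrite /right_deriv_within.
suff -> : (fun s => (- f s - - f t) / (s - t)) = (fun s => - ((f s - f t) / (s - t)))
  by exact: cvgN.
by apply/funext => s; rewrite -mulNr opprB opprK addrC.
Qed.

Lemma right_deriv_withinM T f g t Df Dg : right_deriv_within T f t Df ->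
  right_deriv_within T g t Dg ->
  right_deriv_within T (f \* g) t (Df * g t + f t * Dg).
Proof.
move=> df dg; rewrite /right_deriv_within.
suff -> : (fun s => ((f \* g) s - (f \* g) t) / (s - t)) =
  (fun s => (f s - f t) / (s - t) * g s + f t * ((g s - g t) / (s - t))).
  by apply: cvgD; apply: cvgM => //; [exact: right_deriv_within_cvg dg | exact: cvg_cst].
by apply/funext => s /=; ring.
Qed.

Lemma right_deriv_withinZ T f t D (c : R) : right_deriv_within T f t D ->
  right_deriv_within T (fun s => c * f s) t (c * D).
Proof.
move=> df; rewrite /right_deriv_within.
suff -> : (fun s => (c * f s - c * f t) / (s - t)) =
  (fun s => c * ((f s - f t) / (s - t)))
  by apply: cvgM => //; exact: cvg_cst.
by apply/funext => s; rewrite -mulrBr mulrA.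
Qed.

Lemma right_deriv_within_sqr T f t D : right_deriv_within T f t D ->
  right_deriv_within T (fun s => f s ^+ 2) t (2 * f t * D).
Proof.
move=> df; have := right_deriv_withinM df df; rewrite /right_deriv_within.
have -> : D * f t + f t * D = 2 * f t * D by ring.
by congr (_ --> _); apply/funext => s /=; rewrite !expr2.
Qed.

Lemma right_deriv_within_gt T f t D : right_deriv_within T f t D -> 0 < D ->
  \forall s \near within T t^'+, f t < f s.
Proof.
move=> df D0; near=> s.
have ts : t < s by near: s; apply: cvg_within; exact: nbhs_right_gt.
have : 0 < (f s - f t) / (s - t) by near: s; exact: cvgr_gt df _ D0.
by rewrite pmulr_lgt0 ?invr_gt0 ?subr_gt0.
Unshelve. all: by end_near.
Qed.


End RightDerivative.

Section Induction.
Variable R : realType.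
Implicit Types (T : set R) (P : R -> Prop).

Lemma time_scale_induction_left T t0 m P : closed T -> T t0 -> T m -> t0 <= m ->
  P t0 ->
  (forall t, T t -> t0 <= t -> t < m -> (forall s, T s -> t < s -> m <= s) ->
     P t -> P m) ->
  (t0 < m -> closure [set s | T s /\ t0 <= s /\ s < m] m -> P m) ->
  (forall s, T s -> t0 <= s -> s < m -> P s) -> P m.
Proof.
move=> cT Tt0 Tm t0m P0 scattered dense before.
have [<-//|t0_neq_m] := eqVneq t0 m.
have {t0_neq_m} t0m : t0 < m by rewrite lt_neqAle t0_neq_m.
set G := [set s | T s /\ t0 <= s /\ s < m].
have Gt0 : G t0 by [].
have ubG : ubound G m by move=> s [_ [_ /ltW]].
have clG : closure G (sup G) by apply: closure_sup; [exists t0 | exists m].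
have Tr : T (sup G) by apply: cT; apply: closure_subset clG => s [].
have t0r : t0 <= sup G by apply: ub_le_sup => //; exists m.
have : sup G <= m by apply: ge_sup => //; exists t0.
rewrite le_eqVlt => /predU1P[rm|rm].
  by apply: dense; rewrite // -[X in closure _ X]rm.
apply: (scattered (sup G)) => // [s Ts rs|]; last exact: before.
rewrite leNgt; apply/negP => sm.
have : s <= sup G by apply: ub_le_sup; [exists m | split => //; split => //; lra].
by rewrite leNgt rs.
Qed.

(* The induction principle for time scales (Bohner--Peterson, Thm 1.7) on [t0, b]. *)
Lemma time_scale_induction T t0 b P : closed T -> T t0 -> P t0 ->
  (forall t u, T t -> T u -> t0 <= t -> t < u -> u <= b ->
     (forall s, T s -> t < s -> u <= s) -> P t -> P u) ->
  (forall t, T t -> t0 <= t -> t < b -> closure [set s | T s /\ t < s] t ->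
     P t -> \forall s \near within T t^'+, P s) ->
  (forall t, T t -> t0 < t -> t <= b ->
     closure [set s | T s /\ t0 <= s /\ s < t] t ->
     (forall s, T s -> t0 <= s -> s < t -> P s) -> P t) ->
  forall t, T t -> t0 <= t -> t <= b -> P t.
Proof.
move=> cT Tt0 P0 scattered right_dense left_dense t Tt t0t tb.
apply: contrapT => nPt.
set F := [set s | T s /\ t0 <= s /\ s <= b /\ ~ P s].
have lbF : lbound F t0 by move=> s [_ []].
have clF : closure F (inf F) by apply: closure_inf; [exists t | exists t0].
set m := inf F in clF.
have Tm : T m by apply: cT; apply: closure_subset clF => s [].
have t0m : t0 <= m by apply: lb_le_inf => //; exists t.
have mt : m <= t by apply: ge_inf => //; exists t0.
have before : forall s, T s -> t0 <= s -> s < m -> P s.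
  move=> s Ts t0s sm; apply: contrapT => nPs.
  have : m <= s by apply: ge_inf; [exists t0 | do !split => //; lra].
  by rewrite leNgt sm.
have Pm : P m.
  apply: (time_scale_induction_left cT Tt0 Tm t0m P0) => //
    [u Tu t0u um next Pu|t0m' clm].
    by apply: (scattered u m) => //; lra.
  by apply: left_dense => //; lra.
have F_right : F `<=` [set s | T s /\ m < s].
  move=> s Fs; split; first exact: Fs.1.
  have ms : m <= s by apply: ge_inf => //; exists t0.
  rewrite lt_neqAle ms andbT; apply/eqP => ms'.
  by case: Fs => _ [_ [_]]; apply; rewrite -ms'.
have mb : m < b.
  by have [_ mt'] := F_right t (conj Tt (conj t0t (conj tb nPt))); lra.
have [s [Fs Ps]] := clF (fun s => m < s -> T s -> P s)
  (right_dense m Tm t0m mb (closure_subset F_right clF) Pm).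
by have [Ts ms] := F_right s Fs; case: Fs => _ [_ [_]]; apply; exact: Ps.
Qed.

End Induction.

Section OdeAlgebra.
Variable R : realFieldType.
Implicit Types a b c p q mu : R.

Lemma energy_slope_le a b c p q : c + p * b + q * a = 0 ->
  2 * (a * b + b * c) <= (2 * (1 + `|p| + `|q|) - 1) * (a ^+ 2 + b ^+ 2).
Proof.
move=> ode; have -> : c = - (p * b) - q * a by lra.
have a2 := sqr_ge0 a; have b2 := sqr_ge0 b.
have ab : 2 * `|a * b| <= a ^+ 2 + b ^+ 2.
  rewrite normrM -[a ^+ 2]real_normK ?num_real // -[b ^+ 2]real_normK ?num_real //.
  have := sqr_ge0 (`|a| - `|b|); rewrite sqrrB; lra.
have pb : - (p * b ^+ 2) <= `|p| * (a ^+ 2 + b ^+ 2).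
  apply: le_trans (_ : `|p| * b ^+ 2 <= _); last by apply: ler_wpM2l => //; lra.
  by rewrite -mulNr; apply: ler_wpM2r => //; rewrite -normrN ler_norm.
have qab : - (q * (a * b)) <= `|q| * (a ^+ 2 + b ^+ 2) / 2.
  apply: le_trans (_ : `|q| * `|a * b| <= _); first by rewrite -normrM -normrN ler_norm.
  by rewrite -mulrA; apply: ler_wpM2l => //; lra.
have : 2 * (a * b) <= a ^+ 2 + b ^+ 2 by apply: le_trans ab; rewrite ler_pM2l // ler_norm.
have := mulr_ge0 (normr_ge0 q) (addr_ge0 a2 b2); lra.
Qed.

Lemma energy_jump_le a b c p q mu : c + p * b + q * a = 0 -> 0 <= mu ->
  (a + b * mu) ^+ 2 + (b + c * mu) ^+ 2
    <= (1 + (1 + `|p| + `|q|) * mu) ^+ 2 * (a ^+ 2 + b ^+ 2).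
Proof.
move=> ode mu0; have slope := energy_slope_le ode.
have np := normr_ge0 p; have nq := normr_ge0 q.
have a2 := sqr_ge0 a; have b2 := sqr_ge0 b.
have c2 : c ^+ 2 <= (p ^+ 2 + q ^+ 2) * (a ^+ 2 + b ^+ 2).
  have -> : c = - (p * b + q * a) by lra.
  have := sqr_ge0 (p * a - q * b); nra.
have k2 : 1 + p ^+ 2 + q ^+ 2 <= (1 + `|p| + `|q|) ^+ 2.
  by rewrite -[p ^+ 2]real_normK ?num_real // -[q ^+ 2]real_normK ?num_real //; nra.
have bc : b ^+ 2 + c ^+ 2 <= (1 + `|p| + `|q|) ^+ 2 * (a ^+ 2 + b ^+ 2) by nra.
have -> : (a + b * mu) ^+ 2 + (b + c * mu) ^+ 2
  = a ^+ 2 + b ^+ 2 + mu * (2 * (a * b + b * c)) + mu ^+ 2 * (b ^+ 2 + c ^+ 2) by ring.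
have mu2 := sqr_ge0 mu.
have cross : mu * (2 * (a * b + b * c))
    <= mu * (2 * (1 + `|p| + `|q|) * (a ^+ 2 + b ^+ 2)).
  by apply: ler_wpM2l => //; lra.
have square : mu ^+ 2 * (b ^+ 2 + c ^+ 2)
    <= mu ^+ 2 * ((1 + `|p| + `|q|) ^+ 2 * (a ^+ 2 + b ^+ 2)).
  exact: ler_wpM2l.
lra.
Qed.

End OdeAlgebra.

Section EnergyEstimate.
Variable R : realType.
Variables (T S : set R) (t0 b p q K : R) (y yd ydd e : R -> R).
Hypotheses (T_closed : closed T) (ST : S `<=` T)
  (S_itv : forall s, T s -> t0 <= s -> s <= b -> S s) (kappa_Sb : kappa S b).
Hypotheses
  (y_deriv : forall t, kappa S t -> delta_deriv T y t (yd t))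
  (yd_deriv : forall t, kappa (kappa S) t -> delta_deriv T yd t (ydd t))
  (ode : forall t, kappa (kappa S) t -> ydd t + p * yd t + q * y t = 0)
  (e_deriv : forall t, kappa T t ->
     delta_deriv T e t ((1 + `|p| + `|q|) * e t)).
Hypothesis K_gt0 : 0 < K.

Definition energy_bounded s := 1 <= e s /\ y s ^+ 2 + yd s ^+ 2 <= K * e s ^+ 2.

Let Tb : T b. Proof. exact: ST kappa_Sb.1. Qed.

Let kappaS s : T s -> t0 <= s -> s < b -> kappa S s.
Proof.
by move=> Ts t0s sb; apply: (kappa_lt _ kappa_Sb.1 sb); apply: S_itv => //; lra.
Qed.

Let kappa2S s : T s -> t0 <= s -> s < b -> kappa (kappa S) s.
Proof. by move=> Ts t0s sb; exact: kappa_lt (kappaS Ts t0s sb) kappa_Sb sb. Qed.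

Let kappaT s : T s -> s < b -> kappa T s.
Proof. by move=> Ts sb; exact: kappa_lt Ts Tb sb. Qed.

Lemma energy_bounded_scattered t m : T t -> T m -> t0 <= t -> t < m -> m <= b ->
  (forall s, T s -> t < s -> m <= s) -> energy_bounded t -> energy_bounded m.
Proof.
move=> Tt Tm t0t tm mb next [e1 Vt].
have tb : t < b by lra.
have sigma_t := fjump_scattered Tm tm next.
have := delta_deriv_fjump (y_deriv (kappaS Tt t0t tb)) Tt.
have := delta_deriv_fjump (yd_deriv (kappa2S Tt t0t tb)) Tt.
have := delta_deriv_fjump (e_deriv (kappaT Tt tb)) Tt.
rewrite /energy_bounded sigma_t => -> -> ->.
have mu0 : 0 <= m - t by lra.
have k0 : 0 <= 1 + `|p| + `|q| by have := normr_ge0 p; have := normr_ge0 q; lra.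
have e0 : 0 <= e t by lra.
split; first by have := mulr_ge0 (mulr_ge0 k0 e0) mu0; lra.
apply: le_trans
  (_ : (1 + (1 + `|p| + `|q|) * (m - t)) ^+ 2 * (y t ^+ 2 + yd t ^+ 2) <= _).
  exact: energy_jump_le (ode (kappa2S Tt t0t tb)) mu0.
have -> : K * (e t + (1 + `|p| + `|q|) * e t * (m - t)) ^+ 2
  = (1 + (1 + `|p| + `|q|) * (m - t)) ^+ 2 * (K * e t ^+ 2) by ring.
by apply: ler_wpM2l => //; exact: sqr_ge0.
Qed.

Lemma energy_bounded_right_dense t : T t -> t0 <= t -> t < b ->
  closure [set s | T s /\ t < s] t -> energy_bounded t ->
  \forall s \near within T t^'+, energy_bounded s.
Proof.
move=> Tt t0t tb dense [e1 Vt].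
have sigma_t := fjump_dense dense.
have dy := delta_deriv_dense (y_deriv (kappaS Tt t0t tb)) sigma_t.
have dyd := delta_deriv_dense (yd_deriv (kappa2S Tt t0t tb)) sigma_t.
have de := delta_deriv_dense (e_deriv (kappaT Tt tb)) sigma_t.
have dg := right_deriv_withinD
  (right_deriv_withinZ (c := K) (right_deriv_within_sqr de))
  (right_deriv_withinN
     (right_deriv_withinD (right_deriv_within_sqr dy) (right_deriv_within_sqr dyd))).
have k1 : 1 <= 1 + `|p| + `|q| by have := normr_ge0 p; have := normr_ge0 q; lra.
have Ke : 0 < K * e t ^+ 2 by apply: mulr_gt0 => //; apply: exprn_gt0; lra.
have : 2 * (y t * yd t + yd t * ydd t) <= (2 * (1 + `|p| + `|q|) - 1) * (K * e t ^+ 2).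
  apply: le_trans (energy_slope_le (ode (kappa2S Tt t0t tb))) _.
  by apply: ler_wpM2l => //; lra.
move=> slope.
have Dg : 0 < K * (2 * e t * ((1 + `|p| + `|q|) * e t))
              - (2 * y t * yd t + 2 * yd t * ydd t) by lra.
have De : 0 < (1 + `|p| + `|q|) * e t by apply: mulr_gt0; lra.
near=> s; split.
  suff : e t < e s by lra.
  by near: s; exact: right_deriv_within_gt de De.
suff /= : K * e t ^+ 2 + - (y t ^+ 2 + yd t ^+ 2)
    < K * e s ^+ 2 + - (y s ^+ 2 + yd s ^+ 2) by lra.
by near: s; exact: right_deriv_within_gt dg Dg.
Unshelve. all: by end_near.
Qed.

Lemma energy_bounded_left_dense t : T t -> t0 < t -> t <= b ->
  closure [set s | T s /\ t0 <= s /\ s < t] t ->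
  (forall s, T s -> t0 <= s -> s < t -> energy_bounded s) -> energy_bounded t.
Proof.
move=> Tt t0t tb dense before.
set G := [set s | T s /\ t0 <= s /\ s < t] in dense.
have GT : G `<=` T by move=> s [].
have kappaS_t : kappa S t.
  by move: tb; rewrite le_eqVlt => /predU1P[->//|tb]; apply: kappaS => //; lra.
have kappa2S_t : kappa (kappa S) t.
  apply: kappa_dense kappaS_t (closure_subset _ dense) => s [Ts [t0s st]].
  by split => //; apply: kappaS => //; lra.
have kappaT_t : kappa T t.
  by apply: kappa_dense Tt (closure_subset _ dense) => s [Ts [_ st]].
have cvgG f D : delta_deriv T f t D -> f @ within G (nbhs t) --> f t.
  move=> df; apply: cvg_trans (delta_deriv_cvg df Tt).
  by apply: cvg_app; exact: within_subset.
have ce := cvgG _ _ (e_deriv kappaT_t).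
have cy := cvgG _ _ (y_deriv kappaS_t).
have cyd := cvgG _ _ (yd_deriv kappa2S_t).
split.
  by apply: (closure_cvg_ge dense ce) => s [Ts [t0s st]]; case: (before s Ts t0s st).
have cg : (fun s => K * e s ^+ 2 - (y s ^+ 2 + yd s ^+ 2)) @ within G (nbhs t)
    --> K * e t ^+ 2 - (y t ^+ 2 + yd t ^+ 2).
  by apply: cvgB; [apply: cvgM; [exact: cvg_cst|exact: cvgM]| apply: cvgD; exact: cvgM].
suff : 0 <= K * e t ^+ 2 - (y t ^+ 2 + yd t ^+ 2) by lra.
apply: (closure_cvg_ge dense cg) => s [Ts [t0s st]].
by case: (before s Ts t0s st) => _; lra.
Qed.

Lemma energy_bounded_on t : T t0 -> energy_bounded t0 ->
  T t -> t0 <= t -> t <= b -> energy_bounded t.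
Proof.
move=> Tt0 base; apply: (time_scale_induction T_closed Tt0 base).
- exact: energy_bounded_scattered.
- exact: energy_bounded_right_dense.
- exact: energy_bounded_left_dense.
Qed.

End EnergyEstimate.

Theorem theorem2p2 (R : realType) (T I : set R) (t0 p q : R)
    (y yd ydd ek : R -> R) :
  time_scale T -> is_interval I -> (I `&` T) t0 ->
  (forall t, kappa (I `&` T) t -> delta_deriv T y t (yd t)) ->
  (forall t, kappa (kappa (I `&` T)) t -> delta_deriv T yd t (ydd t)) ->
  (forall t, kappa (kappa (I `&` T)) t -> ydd t + p * yd t + q * y t = 0) ->
  is_ts_exp T (1 + `|p| + `|q|) t0 ek ->
  forall t, kappa (I `&` T) t -> t0 <= t ->
    Num.sqrt (y t ^+ 2 + yd t ^+ 2)
      <= Num.sqrt (y t0 ^+ 2 + yd t0 ^+ 2) * ek t.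
Proof.
move=> [_ T_closed] I_itv [It0 Tt0] y_deriv yd_deriv ode [ek_t0 ek_deriv] t kappa_t t0t.
have [It Tt] := kappa_t.1.
have C0 : 0 <= y t0 ^+ 2 + yd t0 ^+ 2 by apply: addr_ge0; exact: sqr_ge0.
have bounded eps : 0 < eps ->
    energy_bounded (y t0 ^+ 2 + yd t0 ^+ 2 + eps) y yd ek t.
  move=> eps0; apply: (@energy_bounded_on _ T (I `&` T) t0 t p q _ y yd ydd ek
    T_closed (@subIsetr _ I T) _ kappa_t) => //.
  - by move=> s Ts t0s st; split => //; apply: (I_itv t0 t) => //; rewrite t0s st.
  - lra.
  - by rewrite /energy_bounded ek_t0 expr1n mulr1; lra.
have [ek1 _] := bounded 1 ltr01.
have : y t ^+ 2 + yd t ^+ 2 <= (y t0 ^+ 2 + yd t0 ^+ 2) * ek t ^+ 2.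
  rewrite -subr_le0; apply: (le0_small_mul (sqr_ge0 (ek t))) => eps eps0.
  by have [_] := bounded eps eps0; lra.
move=> /ler_wsqrtr; rewrite sqrtrM // sqrtr_sqr ger0_norm //; lra.
Qed.
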